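(* Consider the fifth-order WENO reconstruction of the numerical flux $\hat f_{i\pm\frac12}=\sum_{m=0}^{2}\omega_{m,i\pm\frac12}\hat f^m_{i\pm\frac12}$ on a uniform grid $x_i=x_0+i\Delta x$, for a smooth function $f$. Use the WENO-Z weights with $\epsilon=0$, $$\omega_{m}=\frac{\alpha_m}{\sum_{l=0}^2\alpha_l},\qquad \alpha_m=d_m\Bigl[1+\Bigl(\frac{\tau_5}{\beta^{DS}_{m}}\Bigr)^2\Bigr],\qquad (d_0,d_1,d_2)=\Bigl(\tfrac1{10},\tfrac6{10},\tfrac3{10}\Bigr),$$ where the modified smoothness indicators are $\beta^{DS}_{m,i\pm\frac12}=\beta_{m,i\pm\frac12}(\delta_{m,i}+C)$ and $\tau_5=|\beta_0-\beta_2|$. Assume the multipliers satisfy $\delta_{1,i}=\Phi(\bar x_i)$ and $\delta_{0,i}=\Phi(\bar x_i)+O(\Delta x)$, $\delta_{2,i}=\Phi(\bar x_i)+O(\Delta x)$ for some function $\Phi$ of the stencil $\bar x_i=(x_{i-k},\dots,x_{i+k})$, and that the constant $C$ is chosen so that $P(\bar x_i):=\Phi(\bar x_i)+C>\kappa>0$ for a fixed $\kappa$ (with $P=O(1)$). Then at non-critical points, i.e. where $f_x\neq 0$, $$\omega^{DS}_{m,i\pm\frac12}=d_m+O(\Delta x^6),\qquad m=0,1,2,$$ so in particular the sufficient condition $\omega_m^{\pm}-d_m=O(\Delta x^3)$ for fifth-order accuracy holds and the resulting WENO-Z scheme with the modified smoothness indicators is fifth-order accurate there.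
   Context: Fifth-order WENO: on the stencil $\{x_{i-2},\dots,x_{i+2}\}$, with $f_j=f(u(x_j))$, the candidate fluxes are $\hat f^0_{i+\frac12}=\frac{2f_{i-2}-7f_{i-1}+11f_i}{6}$, $\hat f^1_{i+\frac12}=\frac{-f_{i-1}+5f_i+2f_{i+1}}{6}$, $\hat f^2_{i+\frac12}=\frac{2f_i+5f_{i+1}-f_{i+2}}{6}$ (the $i-\frac12$ versions by shifting all indices by $-1$). The Jiang–Shu smoothness indicators for $\hat f_{i+\frac12}$ are $\beta_0=\frac{13}{12}(f_{i-2}-2f_{i-1}+f_i)^2+\frac14(f_{i-2}-4f_{i-1}+3f_i)^2$, $\beta_1=\frac{13}{12}(f_{i-1}-2f_i+f_{i+1})^2+\frac14(-f_{i-1}+f_{i+1})^2$, $\beta_2=\frac{13}{12}(f_i-2f_{i+1}+f_{i+2})^2+\frac14(3f_i-4f_{i+1}+f_{i+2})^2$; those for $\hat f_{i-\frac12}$ are obtained by index shift $-1$. For smooth $f$ these satisfy $\beta_m=f_x^2\Delta x^2+O(\Delta x^4)$ and $\tau_5=|\beta_0-\beta_2|=\frac{13}{3}|f_{xx}f_{xxx}|\Delta x^5+O(\Delta x^6)$. The same multiplier $\delta_{m,i}$ (depending only on the global stencil position $i$) is used for both $\beta_{m,i+\frac12}$ and $\beta_{m,i-\frac12}$; in the paper $\delta_{m,i}$ are outputs of a convolutional neural network with differentiable activations and receptive field of size $2k+1$, and $\delta_{0,i+1}=\delta_{1,i}=\delta_{2,i-1}$. *)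

From Stdlib Require Import Reals Lra ZArith.
From Coquelicot Require Import Coquelicot.
Open Scope R_scope.

Definition bigO0 (g : R -> R) (k : nat) : Prop :=
  exists K eps : R, 0 < eps /\
    forall h : R, 0 < h < eps -> Rabs (g h) <= K * h ^ k.

Definition dlin (m : nat) : R :=
  match m with 0%nat => 1/10 | 1%nat => 6/10 | _ => 3/10 end.

(* v j = f_{i+j} (values on the stencil relative to position i);
   Jiang--Shu indicators for the flux at i+1/2 *)
Definition betaJS (m : nat) (v : Z -> R) : R :=
  match m with
  | 0%nat => 13/12 * (v (-2)%Z - 2 * v (-1)%Z + v 0%Z) ^ 2
             + 1/4 * (v (-2)%Z - 4 * v (-1)%Z + 3 * v 0%Z) ^ 2
  | 1%nat => 13/12 * (v (-1)%Z - 2 * v 0%Z + v 1%Z) ^ 2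
             + 1/4 * (- v (-1)%Z + v 1%Z) ^ 2
  | _ => 13/12 * (v 0%Z - 2 * v 1%Z + v 2%Z) ^ 2
             + 1/4 * (3 * v 0%Z - 4 * v 1%Z + v 2%Z) ^ 2
  end.

Definition tau5 (v : Z -> R) : R := Rabs (betaJS 0 v - betaJS 2 v).

(* WENO-Z (epsilon = 0) with modified indicators beta^DS_m = beta_m * s m,
   where s m = delta_m + C *)
Definition alphaDS (v : Z -> R) (s : nat -> R) (m : nat) : R :=
  dlin m * (1 + (tau5 v / (betaJS m v * s m)) ^ 2).

Definition omegaDS (v : Z -> R) (s : nat -> R) (m : nat) : R :=
  alphaDS v s m / (alphaDS v s 0 + alphaDS v s 1 + alphaDS v s 2).

(* stencil values around grid point x_i = x with spacing h:
   for i+1/2 : f_{i+j} = f(x + j h);  for i-1/2 : shifted by -1 *)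
Definition stencil_plus (f : R -> R) (x h : R) : Z -> R :=
  fun j => f (x + IZR j * h).
Definition stencil_minus (f : R -> R) (x h : R) : Z -> R :=
  fun j => f (x + IZR (j - 1) * h).

From Stdlib Require Import Reals Lra Lia ZArith List.
From Coquelicot Require Import Coquelicot.
Import ListNotations.
Open Scope R_scope.

(* Taylor expansion around x shows that on a stencil of spacing h the
   Jiang-Shu indicators satisfy beta_0 - beta_2 = 13/12 A B + 1/4 C D with
   A = O(h^3), B = O(h^2), C = O(h), D = O(h^4), hence tau_5 = O(h^5), while
   beta_m >= slope_m^2 / 4 with slope_m = +-2 f'(x) h + O(h^2), so beta_m is
   of exact order h^2 when f'(x) <> 0.  The multipliers delta_m + C stay above
   kappa / 2 for small h, so every ratio q_m = tau_5 / beta^DS_m is O(h^3).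
   Finally alpha_m = d_m (1 + q_m^2) gives |omega_m - d_m| <= q_0^2 + q_1^2 + q_2^2,
   which is O(h^6). *)

Lemma bigO0_le (g g' : R -> R) (k : nat) :
  (forall h, 0 < h -> Rabs (g h) <= Rabs (g' h)) -> bigO0 g' k -> bigO0 g k.
Proof.
  intros Hle [K [eps [Heps HK]]]. exists K, eps. split; [exact Heps |].
  intros h Hh. eapply Rle_trans; [apply Hle; lra | exact (HK h Hh)].
Qed.

Lemma bigO0_ext (g g' : R -> R) (k : nat) :
  (forall h, 0 < h -> g h = g' h) -> bigO0 g' k -> bigO0 g k.
Proof. intros E. apply bigO0_le. intros h Hh. rewrite (E h Hh). apply Rle_refl. Qed.

Lemma bigO0_zero (k : nat) : bigO0 (fun _ => 0) k.
Proof. exists 0, 1. split; [lra |]. intros h _. rewrite Rabs_R0. lra. Qed.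

Lemma bigO0_add (g1 g2 : R -> R) (k : nat) :
  bigO0 g1 k -> bigO0 g2 k -> bigO0 (fun h => g1 h + g2 h) k.
Proof.
  intros [K1 [e1 [He1 HK1]]] [K2 [e2 [He2 HK2]]].
  exists (K1 + K2), (Rmin e1 e2). split; [now apply Rmin_pos |].
  intros h [Hh Hhe]. pose proof (Rmin_l e1 e2). pose proof (Rmin_r e1 e2).
  pose proof (HK1 h ltac:(lra)). pose proof (HK2 h ltac:(lra)).
  pose proof (Rabs_triang (g1 h) (g2 h)). lra.
Qed.

Lemma bigO0_scal (c : R) (g : R -> R) (k : nat) :
  bigO0 g k -> bigO0 (fun h => c * g h) k.
Proof.
  intros [K [eps [Heps HK]]]. exists (Rabs c * K), eps. split; [exact Heps |].
  intros h Hh. rewrite Rabs_mult, Rmult_assoc.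
  apply Rmult_le_compat_l; [apply Rabs_pos | exact (HK h Hh)].
Qed.

Lemma bigO0_mul (g1 g2 : R -> R) (k1 k2 : nat) :
  bigO0 g1 k1 -> bigO0 g2 k2 -> bigO0 (fun h => g1 h * g2 h) (k1 + k2).
Proof.
  intros [K1 [e1 [He1 HK1]]] [K2 [e2 [He2 HK2]]].
  exists (K1 * K2), (Rmin e1 e2). split; [now apply Rmin_pos |].
  intros h [Hh Hhe]. pose proof (Rmin_l e1 e2). pose proof (Rmin_r e1 e2).
  rewrite Rabs_mult, pow_add.
  replace (K1 * K2 * (h ^ k1 * h ^ k2)) with ((K1 * h ^ k1) * (K2 * h ^ k2)) by ring.
  apply Rmult_le_compat; try apply Rabs_pos; [apply HK1 | apply HK2]; lra.
Qed.

Definition bigOmega0 (b : R -> R) (k : nat) : Prop :=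
  exists c eps : R, 0 < c /\ 0 < eps /\
    forall h : R, 0 < h < eps -> c * h ^ k <= b h.

Lemma bigOmega0_pos_lb (b : R -> R) (c : R) :
  0 < c -> (forall h, 0 < h -> c <= b h) -> bigOmega0 b 0.
Proof.
  intros Hc Hb. exists c, 1. split; [exact Hc | split; [lra |]].
  intros h Hh. rewrite pow_O, Rmult_1_r. apply Hb; lra.
Qed.

Lemma bigOmega0_le (b b' : R -> R) (k : nat) :
  (forall h, 0 < h -> b h <= b' h) -> bigOmega0 b k -> bigOmega0 b' k.
Proof.
  intros Hle [c [eps [Hc [Heps Hb]]]]. exists c, eps. do 2 (split; [assumption |]).
  intros h Hh. eapply Rle_trans; [exact (Hb h Hh) | apply Hle; lra].
Qed.

Lemma bigOmega0_mul (b1 b2 : R -> R) (k1 k2 : nat) :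
  bigOmega0 b1 k1 -> bigOmega0 b2 k2 -> bigOmega0 (fun h => b1 h * b2 h) (k1 + k2).
Proof.
  intros [c1 [e1 [Hc1 [He1 Hb1]]]] [c2 [e2 [Hc2 [He2 Hb2]]]].
  exists (c1 * c2), (Rmin e1 e2).
  split; [nra | split; [now apply Rmin_pos |]].
  intros h [Hh Hhe]. pose proof (Rmin_l e1 e2). pose proof (Rmin_r e1 e2).
  rewrite pow_add.
  replace (c1 * c2 * (h ^ k1 * h ^ k2)) with ((c1 * h ^ k1) * (c2 * h ^ k2)) by ring.
  assert (0 <= c1 * h ^ k1) by (apply Rmult_le_pos; [lra | apply pow_le; lra]).
  assert (0 <= c2 * h ^ k2) by (apply Rmult_le_pos; [lra | apply pow_le; lra]).
  apply Rmult_le_compat; try assumption; [apply Hb1 | apply Hb2]; lra.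
Qed.

Lemma bigO0_div (g b : R -> R) (k1 k2 : nat) :
  bigO0 g (k1 + k2) -> bigOmega0 b k2 -> bigO0 (fun h => g h / b h) k1.
Proof.
  intros [K [e1 [He1 HK]]] [c [e2 [Hc [He2 Hb]]]].
  exists (K / c), (Rmin e1 e2). split; [now apply Rmin_pos |].
  intros h [Hh Hhe]. pose proof (Rmin_l e1 e2). pose proof (Rmin_r e1 e2).
  assert (Hhk : 0 < h ^ k2) by (apply pow_lt; lra).
  assert (Hbh : c * h ^ k2 <= b h) by (apply Hb; lra).
  assert (Hgh : Rabs (g h) <= K * h ^ (k1 + k2)) by (apply HK; lra).
  rewrite pow_add in Hgh.
  assert (HA : 0 <= K * h ^ k1).
  { pose proof (Rabs_pos (g h)). apply Rmult_le_reg_r with (h ^ k2); nra. }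
  rewrite Rabs_div, (Rabs_pos_eq (b h)) by nra.
  apply Rle_div_l; [nra |].
  apply Rle_trans with (K * h ^ k1 * h ^ k2); [lra |].
  replace (K * h ^ k1 * h ^ k2) with (K / c * h ^ k1 * (c * h ^ k2)) by (field; lra).
  apply Rmult_le_compat_l; [| exact Hbh].
  replace (K / c * h ^ k1) with (K * h ^ k1 / c) by (field; lra).
  apply Rmult_le_pos; [exact HA | apply Rlt_le, Rinv_0_lt_compat; lra].
Qed.

Lemma bigOmega0_sq (q : R -> R) (a : R) :
  a <> 0 -> bigO0 (fun h => q h - a * h) 2 -> bigOmega0 (fun h => q h ^ 2) 2.
Proof.
  intros Ha [K [eps [Heps HK]]].
  assert (Ha' : 0 < Rabs a) by now apply Rabs_pos_lt.
  assert (HK1 : 0 < 2 * (Rabs K + 1)) by (pose proof (Rabs_pos K); lra).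
  exists (a ^ 2 / 4), (Rmin eps (Rabs a / (2 * (Rabs K + 1)))).
  split; [rewrite <- pow2_abs; nra |].
  split; [apply Rmin_pos; [exact Heps | now apply Rdiv_lt_0_compat] |].
  intros h [Hh Hhe].
  pose proof (Rmin_l eps (Rabs a / (2 * (Rabs K + 1)))).
  pose proof (Rmin_r eps (Rabs a / (2 * (Rabs K + 1)))).
  assert (Hsmall : h * (2 * (Rabs K + 1)) <= Rabs a).
  { apply Rle_div_r; lra. }
  assert (Hdev : Rabs (q h - a * h) <= Rabs K * h ^ 2).
  { eapply Rle_trans; [apply HK; lra |].
    apply Rmult_le_compat_r; [apply pow_le; lra | apply Rle_abs]. }
  assert (Hq : Rabs a * h / 2 <= Rabs (q h)).
  { pose proof (Rabs_triang_inv (a * h) (a * h - q h)) as Htri.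
    replace (a * h - (a * h - q h)) with (q h) in Htri by ring.
    rewrite Rabs_minus_sym, Rabs_mult, (Rabs_pos_eq h) in Htri by lra.
    pose proof (Rabs_pos K). nra. }
  rewrite <- (pow2_abs (q h)), <- (pow2_abs a).
  replace (Rabs a ^ 2 / 4 * h ^ 2) with ((Rabs a * h / 2) ^ 2) by field.
  apply pow_incr. split; [| exact Hq]. pose proof (Rabs_pos a). nra.
Qed.

Lemma bigOmega0_perturb (p q : R -> R) :
  bigOmega0 p 0 -> bigO0 (fun h => q h - p h) 1 -> bigOmega0 q 0.
Proof.
  intros [c [e1 [Hc [He1 Hp]]]] [K [e2 [He2 HK]]].
  assert (HK1 : 0 < 2 * (Rabs K + 1)) by (pose proof (Rabs_pos K); lra).
  set (e3 := c / (2 * (Rabs K + 1))).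
  assert (He3 : 0 < e3) by now apply Rdiv_lt_0_compat.
  exists (c / 2), (Rmin e1 (Rmin e2 e3)).
  split; [lra | split; [repeat apply Rmin_pos; assumption |]].
  intros h [Hh Hhe].
  pose proof (Rmin_l e1 (Rmin e2 e3)). pose proof (Rmin_r e1 (Rmin e2 e3)).
  pose proof (Rmin_l e2 e3). pose proof (Rmin_r e2 e3).
  assert (Hsmall : h * (2 * (Rabs K + 1)) <= c) by (apply Rle_div_r; unfold e3 in *; lra).
  assert (Hph : c <= p h) by (pose proof (Hp h ltac:(lra)); rewrite pow_O in *; lra).
  assert (Hdev : Rabs (q h - p h) <= Rabs K * h).
  { eapply Rle_trans; [apply HK; lra |]. rewrite pow_1.
    apply Rmult_le_compat_r; [lra | apply Rle_abs]. }
  rewrite pow_O, Rmult_1_r.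
  pose proof (Rabs_pos K). revert Hdev; unfold Rabs at 1; destruct Rcase_abs; intros; nra.
Qed.

Definition smooth (f : R -> R) : Prop := forall (n : nat) (y : R), ex_derive_n f n y.

Definition taylor_poly (f : R -> R) (x : R) (n : nat) (t : R) : R :=
  sum_f_R0 (fun k => t ^ k / INR (fact k) * Derive_n f k x) n.

Lemma taylor_poly_at_0 (f : R -> R) (x : R) (n : nat) : taylor_poly f x n 0 = f x.
Proof.
  unfold taylor_poly. induction n as [| n IH]; cbn [sum_f_R0].
  - simpl. field.
  - rewrite IH, pow_i by lia. unfold Rdiv. ring.
Qed.

Lemma smooth_locally (f : R -> R) (n : nat) (y : R) :
  smooth f -> locally y (fun z => forall k, (k <= n)%nat -> ex_derive_n f k z).
Proof. intros fs. apply filter_forall. intros z k _. apply fs. Qed.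

Lemma smooth_comp_opp (f : R -> R) : smooth f -> smooth (fun y => f (- y)).
Proof. intros fs n y. apply ex_derive_n_comp_opp, smooth_locally, fs. Qed.

Lemma taylor_poly_comp_opp (f : R -> R) (x t : R) (n : nat) :
  smooth f -> taylor_poly (fun y => f (- y)) (- x) n (- t) = taylor_poly f x n t.
Proof.
  intros fs. unfold taylor_poly. apply sum_eq. intros k _.
  rewrite Derive_n_comp_opp by apply smooth_locally, fs.
  rewrite Ropp_involutive.
  replace (- t) with (-1 * t) by ring. rewrite Rpow_mult_distr.
  transitivity ((-1 * -1) ^ k * (t ^ k / INR (fact k) * Derive_n f k x)).
  - rewrite Rpow_mult_distr. unfold Rdiv. ring.
  - replace (-1 * -1) with 1 by ring. rewrite pow1. ring.
Qed.

Lemma taylor_remainder_le_pos (f : R -> R) (x t M : R) (n : nat) :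
  smooth f -> 0 < t ->
  (forall y, x <= y <= x + t -> Rabs (Derive_n f (S n) y) <= M) ->
  Rabs (f (x + t) - taylor_poly f x n t) <= M / INR (fact (S n)) * t ^ S n.
Proof.
  intros fs Ht HM.
  destruct (Taylor_Lagrange f n x (x + t)) as [z [Hz Hf]]; [lra | intros; apply fs |].
  replace (x + t - x) with t in Hf by ring. fold (taylor_poly f x n t) in Hf.
  rewrite Hf. replace (_ + _ - _) with (t ^ S n / INR (fact (S n)) * Derive_n f (S n) z)
    by ring.
  pose proof (INR_fact_lt_0 (S n)).
  assert (Ht' : 0 <= t ^ S n / INR (fact (S n))).
  { apply Rmult_le_pos; [apply pow_le; lra | apply Rlt_le, Rinv_0_lt_compat; lra]. }
  rewrite Rabs_mult, (Rabs_pos_eq _ Ht').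
  replace (M / INR (fact (S n)) * t ^ S n) with (t ^ S n / INR (fact (S n)) * M)
    by (field; lra).
  apply Rmult_le_compat_l; [exact Ht' | apply HM; lra].
Qed.

Lemma taylor_remainder_le (f : R -> R) (x t M : R) (n : nat) :
  smooth f ->
  (forall y, Rabs (y - x) <= Rabs t -> Rabs (Derive_n f (S n) y) <= M) ->
  Rabs (f (x + t) - taylor_poly f x n t) <= M / INR (fact (S n)) * Rabs t ^ S n.
Proof.
  intros fs HM. destruct (Rtotal_order t 0) as [Hneg | [Hzero | Hpos]].
  - set (g := fun y => f (- y)).
    replace (f (x + t)) with (g (- x + - t)) by (unfold g; f_equal; ring).
    rewrite <- (taylor_poly_comp_opp f x t n fs), (Rabs_left t) by exact Hneg.
    apply taylor_remainder_le_pos; [now apply smooth_comp_opp | lra |].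
    intros y Hy. unfold g. rewrite Derive_n_comp_opp by apply smooth_locally, fs.
    rewrite Rabs_mult, pow_1_abs, Rmult_1_l.
    apply HM. rewrite (Rabs_left t) by lra. unfold Rabs; destruct Rcase_abs; lra.
  - subst t. rewrite taylor_poly_at_0, Rplus_0_r, Rminus_diag, Rabs_R0, pow_i by lia.
    lra.
  - rewrite (Rabs_pos_eq t) by lra.
    apply taylor_remainder_le_pos; [exact fs | exact Hpos |].
    intros y Hy. apply HM. rewrite !Rabs_pos_eq; lra.
Qed.

Lemma Derive_n_bounded (f : R -> R) (k : nat) (a b : R) :
  smooth f -> a <= b -> exists M, forall y, a <= y <= b -> Rabs (Derive_n f k y) <= M.
Proof.
  intros fs Hab.
  destruct (continuity_ab_maj (fun y => Rabs (Derive_n f k y)) a b Hab) as [z [Hz _]].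
  - intros y _. apply (continuity_pt_comp (Derive_n f k) Rabs); [| apply Rcontinuity_abs].
    apply continuity_pt_filterlim. apply (ex_derive_continuous (Derive_n f k)), (fs (S k)).
  - exists (Rabs (Derive_n f k z)). exact Hz.
Qed.

Lemma taylor_remainder_bigO (f : R -> R) (x r : R) (n : nat) :
  smooth f -> bigO0 (fun h => f (x + r * h) - taylor_poly f x n (r * h)) (S n).
Proof.
  intros fs. pose proof (Rabs_pos r).
  destruct (Derive_n_bounded f (S n) (x - Rabs r) (x + Rabs r) fs ltac:(lra)) as [M HM].
  exists (M / INR (fact (S n)) * Rabs r ^ S n), 1. split; [lra |].
  intros h Hh.
  replace (M / INR (fact (S n)) * Rabs r ^ S n * h ^ S n)
    with (M / INR (fact (S n)) * Rabs (r * h) ^ S n)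
    by (rewrite Rabs_mult, (Rabs_pos_eq h), Rpow_mult_distr by lra; ring).
  apply taylor_remainder_le; [exact fs |].
  intros y Hy. apply HM. rewrite Rabs_mult, (Rabs_pos_eq h) in Hy by lra.
  revert Hy. unfold Rabs at 1. destruct Rcase_abs; intros; nra.
Qed.

Definition finite_diff (g : R -> R) (l : list (R * R)) (h : R) : R :=
  fold_right (fun cr acc => fst cr * g (snd cr * h) + acc) 0 l.

Lemma finite_diff_taylor_bigO (f : R -> R) (x : R) (n : nat) (l : list (R * R)) :
  smooth f ->
  bigO0 (fun h => finite_diff (fun t => f (x + t)) l h
                  - finite_diff (taylor_poly f x n) l h) (S n).
Proof.
  intros fs. induction l as [| [c r] l IH].
  - apply (bigO0_ext _ _ _ (fun h _ => Rminus_diag 0)), bigO0_zero.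
  - pose proof (bigO0_scal c _ _ (taylor_remainder_bigO f x r n fs)) as Hhead.
    eapply bigO0_ext; [| exact (bigO0_add _ _ _ Hhead IH)].
    intros h _. unfold finite_diff. cbn [fold_right fst snd]. ring.
Qed.

Definition js_slope (m : nat) (v : Z -> R) : R :=
  match m with
  | 0%nat => v (-2)%Z - 4 * v (-1)%Z + 3 * v 0%Z
  | 1%nat => - v (-1)%Z + v 1%Z
  | _ => 3 * v 0%Z - 4 * v 1%Z + v 2%Z
  end.

Lemma betaJS_ge_slope (m : nat) (v : Z -> R) : 1/4 * js_slope m v ^ 2 <= betaJS m v.
Proof.
  destruct m as [| [| m]]; cbn [betaJS js_slope];
    match goal with |- _ <= 13/12 * ?a ^ 2 + _ => pose proof (pow2_ge_0 a) end; lra.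
Qed.

Lemma betaJS0_sub_betaJS2 (v : Z -> R) :
  betaJS 0 v - betaJS 2 v =
    13/12 * ((v (-2)%Z - 2 * v (-1)%Z + 2 * v 1%Z - v 2%Z)
             * (v (-2)%Z - 2 * v (-1)%Z + 2 * v 0%Z - 2 * v 1%Z + v 2%Z))
    + 1/4 * ((v (-2)%Z - 4 * v (-1)%Z + 4 * v 1%Z - v 2%Z)
             * (v (-2)%Z - 4 * v (-1)%Z + 6 * v 0%Z - 4 * v 1%Z + v 2%Z)).
Proof. cbn [betaJS]. ring. Qed.

Definition tau_ratio (v : Z -> R) (sg : nat -> R) (l : nat) : R :=
  tau5 v / (betaJS l v * sg l).

(* Holds even where an indicator vanishes (the ratio is then junk): only
   [0 <= tau_ratio ^ 2] is used. *)
Lemma omegaDS_sub_dlin_le (v : Z -> R) (sg : nat -> R) (m : nat) : (m <= 2)%nat ->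
  Rabs (omegaDS v sg m - dlin m)
    <= tau_ratio v sg 0 ^ 2 + tau_ratio v sg 1 ^ 2 + tau_ratio v sg 2 ^ 2.
Proof.
  intros Hm.
  assert (Hdev : forall d q den B, 0 <= d <= 1 -> 1 <= den -> Rabs (1 + q - den) <= B ->
            Rabs (d * (1 + q) / den - d) <= B).
  { intros d q den B Hd Hden Hq.
    replace (d * (1 + q) / den - d) with (d * (1 + q - den) / den) by (field; lra).
    rewrite Rabs_div, Rabs_mult, (Rabs_pos_eq d), (Rabs_pos_eq den) by lra.
    apply Rle_div_l; [lra |]. pose proof (Rabs_pos (1 + q - den)). nra. }
  pose proof (pow2_ge_0 (tau_ratio v sg 0)).
  pose proof (pow2_ge_0 (tau_ratio v sg 1)).
  pose proof (pow2_ge_0 (tau_ratio v sg 2)).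
  unfold omegaDS, alphaDS, tau_ratio in *.
  destruct m as [| [| [| m]]]; [| | | lia]; apply Hdev; cbn [dlin]; try lra;
    apply Rabs_le; lra.
Qed.

Section Stencil.

Variables (f : R -> R) (x s : R) (st : R -> Z -> R).
Hypothesis f_smooth : smooth f.
Hypothesis st_def : forall h j, st h j = f (x + (IZR j + s) * h).

(* Each combination below annihilates the Taylor polynomial of degree [n] up to
   its slope term, which [ring] checks once the factorials [0!] and [1!] are
   evaluated; only the Taylor remainder, of order [h^(n+1)], survives. *)
Ltac finite_diff_estimate l n :=
  eapply bigO0_ext; [| exact (finite_diff_taylor_bigO f x n l f_smooth)];
  intros h _; cbn [js_slope]; rewrite ?st_def; unfold finite_diff, taylor_poly;
  cbn [fold_right fst snd sum_f_R0];
  change (INR (fact 0)) with 1; try change (INR (fact 1)) with 1;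
  try change (Derive_n f 1 x) with (Derive f x); unfold Rdiv; rewrite ?Rinv_1; ring.

Lemma stencil_diff1_bigO :
  bigO0 (fun h => st h (-2) - 4 * st h (-1) + 4 * st h 1 - st h 2) 1.
Proof.
  finite_diff_estimate
    [(1, IZR (-2) + s); (-4, IZR (-1) + s); (4, IZR 1 + s); (-1, IZR 2 + s)] 0%nat.
Qed.

Lemma stencil_diff2_bigO :
  bigO0 (fun h => st h (-2) - 2 * st h (-1) + 2 * st h 0 - 2 * st h 1 + st h 2) 2.
Proof.
  finite_diff_estimate
    [(1, IZR (-2) + s); (-2, IZR (-1) + s); (2, IZR 0 + s);
     (-2, IZR 1 + s); (1, IZR 2 + s)] 1%nat.
Qed.

Lemma stencil_diff3_bigO :
  bigO0 (fun h => st h (-2) - 2 * st h (-1) + 2 * st h 1 - st h 2) 3.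
Proof.
  finite_diff_estimate
    [(1, IZR (-2) + s); (-2, IZR (-1) + s); (2, IZR 1 + s); (-1, IZR 2 + s)] 2%nat.
Qed.

Lemma stencil_diff4_bigO :
  bigO0 (fun h => st h (-2) - 4 * st h (-1) + 6 * st h 0 - 4 * st h 1 + st h 2) 4.
Proof.
  finite_diff_estimate
    [(1, IZR (-2) + s); (-4, IZR (-1) + s); (6, IZR 0 + s);
     (-4, IZR 1 + s); (1, IZR 2 + s)] 3%nat.
Qed.

Lemma js_slope_bigO (m : nat) : Derive f x <> 0 -> (m <= 2)%nat ->
  exists a, a <> 0 /\ bigO0 (fun h => js_slope m (st h) - a * h) 2.
Proof.
  intros Hf Hm. destruct m as [| [| [| m]]]; [| | | lia].
  - exists (2 * Derive f x). split; [lra |].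
    finite_diff_estimate [(1, IZR (-2) + s); (-4, IZR (-1) + s); (3, IZR 0 + s)] 1%nat.
  - exists (2 * Derive f x). split; [lra |].
    finite_diff_estimate [(-1, IZR (-1) + s); (1, IZR 1 + s)] 1%nat.
  - exists (-2 * Derive f x). split; [lra |].
    finite_diff_estimate [(3, IZR 0 + s); (-4, IZR 1 + s); (1, IZR 2 + s)] 1%nat.
Qed.

Lemma betaJS_stencil_bigOmega (m : nat) : Derive f x <> 0 -> (m <= 2)%nat ->
  bigOmega0 (fun h => betaJS m (st h)) 2.
Proof.
  intros Hf Hm. destruct (js_slope_bigO m Hf Hm) as [a [Ha Hslope]].
  apply (bigOmega0_le (fun h => 1/4 * js_slope m (st h) ^ 2)).
  - intros h _. apply betaJS_ge_slope.
  - apply (bigOmega0_mul _ _ 0 2); [apply (bigOmega0_pos_lb _ (1/4)); intros; lra |].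
    exact (bigOmega0_sq _ a Ha Hslope).
Qed.

Lemma tau5_stencil_bigO : bigO0 (fun h => tau5 (st h)) 5.
Proof.
  eapply bigO0_le; [| exact (bigO0_add _ _ _
     (bigO0_scal (13/12) _ _ (bigO0_mul _ _ 3 2 stencil_diff3_bigO stencil_diff2_bigO))
     (bigO0_scal (1/4) _ _ (bigO0_mul _ _ 1 4 stencil_diff1_bigO stencil_diff4_bigO)))].
  intros h _. unfold tau5. rewrite Rabs_Rabsolu, betaJS0_sub_betaJS2. apply Rle_refl.
Qed.

Lemma tau_ratio_stencil_bigO (sg : nat -> R -> R) (l : nat) :
  Derive f x <> 0 -> (l <= 2)%nat -> bigOmega0 (sg l) 0 ->
  bigO0 (fun h => tau_ratio (st h) (fun k => sg k h) l) 3.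
Proof.
  intros Hf Hl Hsg.
  exact (bigO0_div _ _ 3 2 tau5_stencil_bigO
           (bigOmega0_mul _ _ 2 0 (betaJS_stencil_bigOmega l Hf Hl) Hsg)).
Qed.

Lemma omegaDS_stencil_bigO (sg : nat -> R -> R) (m : nat) :
  Derive f x <> 0 -> (forall l, (l <= 2)%nat -> bigOmega0 (sg l) 0) -> (m <= 2)%nat ->
  bigO0 (fun h => omegaDS (st h) (fun l => sg l h) m - dlin m) 6.
Proof.
  intros Hf Hsg Hm.
  assert (Hsq : forall l, (l <= 2)%nat ->
            bigO0 (fun h => tau_ratio (st h) (fun k => sg k h) l
                            * tau_ratio (st h) (fun k => sg k h) l) 6).
  { intros l Hl. pose proof (tau_ratio_stencil_bigO sg l Hf Hl (Hsg l Hl)) as Hr.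
    exact (bigO0_mul _ _ 3 3 Hr Hr). }
  eapply bigO0_le; [| exact (bigO0_add _ _ _ (bigO0_add _ _ _
     (Hsq 0%nat ltac:(lia)) (Hsq 1%nat ltac:(lia))) (Hsq 2%nat ltac:(lia)))].
  intros h _. eapply Rle_trans; [exact (omegaDS_sub_dlin_le _ _ m Hm) |].
  eapply Rle_trans; [| apply Rle_abs]. right. ring.
Qed.

End Stencil.

Lemma multiplier_bigOmega (delta Phi : R -> R) (C kappa : R) :
  0 < kappa -> (forall h, 0 < h -> Phi h + C > kappa) ->
  bigO0 (fun h => delta h - Phi h) 1 -> bigOmega0 (fun h => delta h + C) 0.
Proof.
  intros Hk HP Hdelta. apply (bigOmega0_perturb (fun h => Phi h + C)).
  - apply (bigOmega0_pos_lb _ kappa Hk). intros h Hh. apply Rlt_le, HP, Hh.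
  - eapply bigO0_ext; [| exact Hdelta]. intros h _. cbv beta. ring.
Qed.

Theorem mainTheorem1
  (f : R -> R) (x : R)
  (f_smooth : forall (n : nat) (y : R), ex_derive_n f n y)
  (f_noncrit : Derive f x <> 0)
  (delta : nat -> R -> R) (Phi : R -> R) (C kappa : R)
  (kappa_pos : 0 < kappa)
  (H1 : forall h, 0 < h -> delta 1%nat h = Phi h)
  (H0 : bigO0 (fun h => delta 0%nat h - Phi h) 1)
  (H2 : bigO0 (fun h => delta 2%nat h - Phi h) 1)
  (HP : forall h, 0 < h -> Phi h + C > kappa)
  (HPbd : bigO0 (fun h => Phi h + C) 0) :
  forall m : nat, (m <= 2)%nat ->
    bigO0 (fun h => omegaDS (stencil_plus f x h) (fun l => delta l h + C) m
                    - dlin m) 6 /\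
    bigO0 (fun h => omegaDS (stencil_minus f x h) (fun l => delta l h + C) m
                    - dlin m) 6.
Proof.
  (* Only the lower bound [HP] on [P = Phi + C] matters. *)
  intros m Hm.
  assert (Hsg : forall l, (l <= 2)%nat -> bigOmega0 (fun h => delta l h + C) 0).
  { intros l Hl. apply (multiplier_bigOmega _ Phi C kappa kappa_pos HP).
    destruct l as [| [| [| l]]]; [exact H0 | | exact H2 | lia].
    apply (bigO0_ext _ (fun _ => 0)); [intros h Hh; rewrite H1 by exact Hh; ring |].
    apply bigO0_zero. }
  split.
  - apply (omegaDS_stencil_bigO f x 0 _ f_smooth); try assumption.
    intros h j. unfold stencil_plus. now rewrite Rplus_0_r.
  - apply (omegaDS_stencil_bigO f x (-1) _ f_smooth); try assumption.
    intros h j. unfold stencil_minus. now rewrite minus_IZR.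
Qed.
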